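(* There is a constant $\breve C_1>0$, independent of $N$ (depending only on $\Omega$), such that for all $f,g\in\mathcal C_{\rm per}$, $$\|\Delta_h(fg)\|_2\le\breve C_1\big(\|f\|_2+\|\Delta_hf\|_2\big)\big(\|g\|_2+\|\Delta_hg\|_2\big),$$ where $fg$ denotes the pointwise product.
   Context: Grid setting: $\Omega=(0,1)^3$, $N$ a positive integer, $h=1/N$. $\mathcal C_{\rm per}$ is the space of complex-valued grid functions on the points $(ih,jh,kh)$, $N$-periodic in each index. Discrete inner product $\langle f,g\rangle=h^3\sum_{i,j,k=1}^N\overline{f_{i,j,k}}\,g_{i,j,k}$, $\|f\|_2=\langle f,f\rangle^{1/2}$. Forward differences $D_xf_{i+1/2,j,k}=(f_{i+1,j,k}-f_{i,j,k})/h$ (similarly $D_y,D_z$), and $\Delta_h=D_x^2+D_y^2+D_z^2$ is the standard 7-point discrete Laplacian, $(\Delta_hf)_{i,j,k}=h^{-2}(f_{i+1,j,k}+f_{i-1,j,k}+f_{i,j+1,k}+f_{i,j-1,k}+f_{i,j,k+1}+f_{i,j,k-1}-6f_{i,j,k})$. *)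

From HB Require Import structures.
From mathcomp Require Import all_boot all_order all_algebra.
From mathcomp Require Import complex reals.
Set Implicit Arguments. Unset Strict Implicit. Unset Printing Implicit Defensive.
Import Order.TTheory GRing.Theory Num.Theory.
Local Open Scope ring_scope.

Section Grid.
Variable R : realType.

(* A complex-valued grid function on the points (ih, jh, kh), i,j,k : int. *)
Definition gridfun := int -> int -> int -> R[i].

Definition periodic (N : nat) (f : gridfun) : Prop :=
  forall i j k : int,
    [/\ f (i + N%:Z) j k = f i j k,
        f i (j + N%:Z) k = f i j k &
        f i j (k + N%:Z) = f i j k].

Definition hN (N : nat) : R := 1 / N%:R.

Definition lap_h (N : nat) (f : gridfun) : gridfun := fun i j k =>
  ((hN N)%:C)%C ^-2 *
  (f (i + 1) j k + f (i - 1) j k + f i (j + 1) k + f i (j - 1) k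
   + f i j (k + 1) + f i j (k - 1) - 6%:R * f i j k).

Definition gmul (f g : gridfun) : gridfun := fun i j k => f i j k * g i j k.

Definition norm2 (N : nat) (f : gridfun) : R :=
  Num.sqrt (hN N ^+ 3 *
    \sum_(i < N) \sum_(j < N) \sum_(k < N)
       (Normc.normc (f (i.+1)%:Z (j.+1)%:Z (k.+1)%:Z)) ^+ 2).

End Grid.

From Pilot Require Import Defs.
From HB Require Import structures.
From mathcomp Require Import all_boot all_order all_algebra.
From mathcomp Require Import complex reals trigo.
From mathcomp Require Import ring lra zify.
(* [trigo] exports its own [periodic]; re-import [Defs] so that [periodic] is the grid notion. *)
Import Defs.
Import Order.TTheory GRing.Theory Num.Theory.
Local Open Scope ring_scope.

(* Identify a periodic grid function with a function on G = (Z/NZ)^3 and use the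
   discrete Fourier transform on G.  By Parseval the grid norm becomes an l2 norm of
   Fourier coefficients, and Delta_h becomes multiplication by -lambda_k with
   lambda_k = N^2 sum_i |1 - w^(k_i)|^2, w = exp(2 pi i / N).  The symbol satisfies
   lambda_k <= 2 lambda_m + 2 lambda_(k-m) and lambda_k >= sum_i d(k_i)^2, where d is the
   distance to 0 mod N, so K = sum_k (1 + lambda_k)^-2 <= 120 for every N.  The transform
   of fg is a convolution, so lambda_k |(fg)^(k)| is bounded by the convolutions of
   lambda |f^| with |g^| and of |f^| with lambda |g^|; Young's inequality bounds these by
   ||g^||_1 ||Delta f|| and ||f^||_1 ||Delta g||, and Cauchy-Schwarz with weights 1 + lambda_k
   gives the discrete Sobolev bound ||f^||_1^2 <= 2 K |G|^2 (||f|| + ||Delta f||)^2. *)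

Lemma cauchy_schwarz {R : realFieldType} {I : finType} (u v : I -> R) :
  (\sum_i u i * v i) ^+ 2 <= (\sum_i u i ^+ 2) * (\sum_i v i ^+ 2).
Proof.
rewrite expr2 !big_distrlr /=.
set L := (X in X <= _); set Rs := (X in _ <= X).
have twice_Rs : Rs + Rs = \sum_i \sum_j (u i ^+ 2 * v j ^+ 2 + u j ^+ 2 * v i ^+ 2).
  rewrite {2}/Rs exchange_big -big_split /=.
  by apply: eq_bigr => i _; rewrite -big_split.
have twice_L : L + L = \sum_i \sum_j (u i * v i * (u j * v j) *+ 2).
  by rewrite -big_split; apply: eq_bigr => i _; rewrite -big_split.
suff : L + L <= Rs + Rs by lra.
rewrite twice_Rs twice_L; apply: ler_sum => i _; apply: ler_sum => j _.
(* Lagrange's identity, term by term *)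
have := sqr_ge0 (u i * v j - u j * v i); nra.
Qed.

Lemma cauchy_schwarz_weighted {R : rcfType} {I : finType} (w x : I -> R) :
  (forall i, 0 <= w i) ->
  (\sum_i w i * x i) ^+ 2 <= (\sum_i w i) * (\sum_i w i * x i ^+ 2).
Proof.
move=> w_ge0; have sqrt_w i : Num.sqrt (w i) ^+ 2 = w i by rewrite sqr_sqrtr.
have := cauchy_schwarz (fun i => Num.sqrt (w i)) (fun i => Num.sqrt (w i) * x i).
under eq_bigr do rewrite mulrA -expr2 sqrt_w.
under [X in _ <= X * _]eq_bigr do rewrite sqrt_w.
by under [X in _ <= _ * X]eq_bigr do rewrite exprMn sqrt_w.
Qed.

Definition zpnorm (N k : nat) : nat := minn k (N - k).

Lemma sum_ltn_ord (N t : nat) : (\sum_(j < N) (j < t) = minn N t)%N.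
Proof.
elim: N => [|N IH]; first by rewrite big_ord0 min0n.
by rewrite big_ord_recr /= IH; case: (ltnP N t); lia.
Qed.

Lemma count_zpnorm_le (N t : nat) : (\sum_(j < N) (zpnorm N j <= t) <= t.*2.+1)%N.
Proof.
apply: (@leq_trans (\sum_(j < N) ((j < t.+1) + (N - j < t.+1)))%N).
  by apply: leq_sum => j _; rewrite /zpnorm; lia.
rewrite big_split /= sum_ltn_ord (reindex_inj rev_ord_inj) /=.
under eq_bigr => j _ do rewrite subKn //.
by rewrite sum_ltn_ord; lia.
Qed.

Section InverseSquareSums.
Variable R : realFieldType.

Lemma sum_inv1Dsqr_le (N : nat) : \sum_(k < N) (1 + k%:R ^+ 2)^-1 <= 4 :> R.
Proof.
suff tele : \sum_(k < N) (1 + k%:R ^+ 2)^-1 <= 4 - 4 / (N%:R + 1) :> R.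
  by apply: le_trans tele _; rewrite gerDl oppr_le0 divr_ge0 // addr_ge0.
elim: N => [|N IH]; first by rewrite big_ord0 add0r divr1 subrr.
rewrite big_ord_recr /= -[N.+1%:R]natr1.
have x_ge0 : 0 <= N%:R :> R by [].
move: IH; set x : R := N%:R => IH.
suff : (1 + x ^+ 2)^-1 <= 4 / (x + 1) - 4 / (x + 1 + 1) by lra.
rewrite -subr_ge0.
have -> : 4 / (x + 1) - 4 / (x + 1 + 1) - (1 + x ^+ 2)^-1
    = (3 * x ^+ 2 - 3 * x + 2) / ((x + 1) * (x + 2) * (1 + x ^+ 2)).
  by field; apply/and3P; split; apply/negP => /eqP; nra.
by apply: divr_ge0; [nra | rewrite !mulr_ge0 //; nra].
Qed.

Lemma sum_inv1Dsqr_zpnorm_le (N : nat) :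
  \sum_(k < N) (1 + (zpnorm N k)%:R ^+ 2)^-1 <= 8 :> R.
Proof.
have inv_ge0 (m : nat) : 0 <= (1 + m%:R ^+ 2)^-1 :> R.
  by rewrite invr_ge0 addr_ge0 ?sqr_ge0.
apply: (@le_trans _ _ (\sum_(k < N)
    ((1 + (k : nat)%:R ^+ 2)^-1 + (1 + (N - k)%:R ^+ 2)^-1))).
  apply: ler_sum => k _; rewrite /zpnorm.
  have := inv_ge0 k; have := inv_ge0 (N - k)%N.
  by case: (leqP k (N - k)); lra.
rewrite big_split /=.
suff : \sum_(k < N) (1 + (N - k)%:R ^+ 2)^-1 <= 4 :> R.
  by have := sum_inv1Dsqr_le N; lra.
rewrite (reindex_inj rev_ord_inj) /=.
under eq_bigr => j _ do rewrite subKn //.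
apply: le_trans (sum_inv1Dsqr_le N.+1).
by rewrite [X in _ <= X]big_ord_recl /= lerDr inv_ge0.
Qed.

Lemma inv_sqr1D_le (p q : R) : 0 <= p -> p <= q -> (1 + q)^-2 <= (1 + p)^-2.
Proof. by move=> p_ge0 pq; rewrite lef_pV2 ?posrE ?exprn_gt0; nra. Qed.

(* The contribution of the lattice points (a, b, c) at which a is the largest coordinate. *)
Definition max_coord_term (a b c : nat) : R :=
  (b <= a)%N%:R * (c <= a)%N%:R * (1 + a%:R ^+ 2)^-2.

Lemma max_coord_term_ge0 a b c : 0 <= max_coord_term a b c.
Proof. by rewrite /max_coord_term !mulr_ge0 // invr_ge0 exprn_ge0 // addr_ge0 ?sqr_ge0. Qed.

Lemma inv_sqr1D3_le (a b c : nat) :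
  (1 + a%:R ^+ 2 + b%:R ^+ 2 + c%:R ^+ 2)^-2
  <= max_coord_term a b c + max_coord_term b a c + max_coord_term c a b.
Proof.
have max_term_le (s : R) x y z : (y <= x)%N -> (z <= x)%N -> x%:R ^+ 2 <= s ->
    (1 + s)^-2 <= max_coord_term x y z.
  by move=> yx zx xs; rewrite /max_coord_term yx zx !mul1r inv_sqr1D_le ?sqr_ge0.
have := max_coord_term_ge0 a b c; have := max_coord_term_ge0 b a c.
have := max_coord_term_ge0 c a b.
have := sqr_ge0 (a%:R : R); have := sqr_ge0 (b%:R : R); have := sqr_ge0 (c%:R : R).
rewrite -!addrA; set s := (X in (1 + X)^-2) => c2 b2 a2.
have : [|| (b <= a) && (c <= a), (a <= b) && (c <= b) | (a <= c) && (b <= c)]%N by lia.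
case/or3P => /andP[h1 h2].
- by have := max_term_le s a b c h1 h2 ltac:(rewrite /s; lra); lra.
- by have := max_term_le s b a c h1 h2 ltac:(rewrite /s; lra); lra.
- by have := max_term_le s c a b h1 h2 ltac:(rewrite /s; lra); lra.
Qed.

Lemma count_mul_inv_sqr_le {m c1 c2 : R} : 0 <= m ->
  0 <= c1 <= 2 * m + 1 -> 0 <= c2 <= 2 * m + 1 ->
  c1 * c2 * (1 + m ^+ 2)^-2 <= 5 * (1 + m ^+ 2)^-1.
Proof.
move=> m_ge0 /andP[c1_ge0 c1_le] /andP[c2_ge0 c2_le].
have p_gt0 : 0 < 1 + m ^+ 2 by rewrite ltr_pwDl ?sqr_ge0.
have -> : 5 * (1 + m ^+ 2)^-1 = 5 * (1 + m ^+ 2) * (1 + m ^+ 2)^-2.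
  by field; rewrite gt_eqF.
(* 5 (1 + m^2) - (2 m + 1)^2 = (m - 2)^2 *)
apply: ler_wpM2r; first by rewrite invr_ge0 exprn_ge0 ?ltW.
have := sqr_ge0 (m - 2); have := ler_pM c1_ge0 c2_ge0 c1_le c2_le; nra.
Qed.

Lemma sum_max_coord_term_le (N : nat) :
  \sum_(i < N) \sum_(j < N) \sum_(l < N)
    max_coord_term (zpnorm N i) (zpnorm N j) (zpnorm N l) <= 40.
Proof.
pose cnt (t : nat) : R := \sum_(j < N) (zpnorm N j <= t)%N%:R.
have cnt_le t : 0 <= cnt t <= 2 * t%:R + 1.
  rewrite /cnt -natr_sum ler0n /= -[2]/(2%:R) -natrM natr1 ler_nat mul2n.
  exact: count_zpnorm_le.
apply: (@le_trans _ _ (\sum_(i < N) 5 * (1 + (zpnorm N i)%:R ^+ 2)^-1)).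
  apply: ler_sum => i _.
  apply: le_trans (count_mul_inv_sqr_le (ler0n _ _) (cnt_le _) (cnt_le _)).
  rewrite /cnt big_distrlr /= mulr_suml; apply: ler_sum => j _.
  by rewrite mulr_suml.
by rewrite -mulr_sumr; have := sum_inv1Dsqr_zpnorm_le N; lra.
Qed.

Lemma sum_inv_sqr1D3_zpnorm_le (N : nat) :
  \sum_(i < N) \sum_(j < N) \sum_(l < N)
    (1 + (zpnorm N i)%:R ^+ 2 + (zpnorm N j)%:R ^+ 2 + (zpnorm N l)%:R ^+ 2)^-2
  <= 120 :> R.
Proof.
set n := zpnorm N.
pose S := \sum_(i < N) \sum_(j < N) \sum_(l < N) max_coord_term (n i) (n j) (n l).
have Sji : \sum_(i < N) \sum_(j < N) \sum_(l < N) max_coord_term (n j) (n i) (n l) = S.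
  by rewrite exchange_big.
have Sli : \sum_(i < N) \sum_(j < N) \sum_(l < N) max_coord_term (n l) (n i) (n j) = S.
  by under eq_bigr => i _ do rewrite exchange_big; rewrite exchange_big.
apply: le_trans (_ : S + S + S <= _); last first.
  by have S_le : S <= 40 := sum_max_coord_term_le N; lra.
rewrite -{2}Sji -{2}Sli /S -!big_split.
apply: ler_sum => i _; rewrite -!big_split; apply: ler_sum => j _.
by rewrite -!big_split; apply: ler_sum => l _; exact: inv_sqr1D3_le.
Qed.

End InverseSquareSums.

Local Open Scope complex_scope.

Section ComplexModulus.
Context {R : rcfType}.
Implicit Types z : R[i].
Local Notation normc := (@Normc.normc R).

Lemma normc_ge0 z : 0 <= normc z.
Proof. by case: z => a b; exact: sqrtr_ge0. Qed.

Lemma sqr_normc z : (normc z ^+ 2)%:C = z * conjc z.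
Proof.
case: z => a b /=; rewrite sqr_sqrtr ?addr_ge0 ?sqr_ge0 //.
by apply/eqP; rewrite eq_complex /=; apply/andP; split; apply/eqP; ring.
Qed.

Lemma sqr_normc_ReIm z : normc z ^+ 2 = complex.Re z ^+ 2 + complex.Im z ^+ 2.
Proof. by case: z => a b /=; rewrite sqr_sqrtr // addr_ge0 ?sqr_ge0. Qed.

Lemma normc_real (r : R) : normc r%:C = `|r|.
Proof. by rewrite /Normc.normc /= expr0n /= addr0 sqrtr_sqr. Qed.

Lemma normcJ z : normc (conjc z) = normc z.
Proof. by case: z => a b; rewrite /Normc.normc /= sqrrN. Qed.

Lemma normc_sum (I : finType) (F : I -> R[i]) : normc (\sum_i F i) <= \sum_i normc (F i).
Proof.
elim/big_rec2: _ => [|i y1 y2 _ IH]; first by rewrite Normc.normc0.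
by apply: le_trans (le_normcD _ _) _; rewrite lerD2l.
Qed.

Lemma normc_unit z : z * conjc z = 1 -> normc z = 1.
Proof.
move=> zJ; have : (normc z ^+ 2)%:C = 1%:C by rewrite sqr_normc zJ.
move/complexI/eqP; rewrite sqrf_eq1 => /orP[/eqP //|/eqP nz].
by have := normc_ge0 z; rewrite nz; lra.
Qed.

Lemma sqr_normc_1B_unit z : z * conjc z = 1 -> (normc (1 - z) ^+ 2)%:C = 2%:R - z - conjc z.
Proof.
move=> zJ; rewrite sqr_normc rmorphB rmorph1.
have -> : (1 - z) * (1 - conjc z) = 1 - z - conjc z + z * conjc z by ring.
by rewrite zJ; ring.
Qed.

End ComplexModulus.

Section YoungConvolution.
Variables (R : rcfType) (G : finZmodType).
Implicit Types p q : G -> R.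

Lemma sumr_translate (F : G -> R) m : \sum_k F (k - m) = \sum_k F k.
Proof. by rewrite [RHS](reindex_inj (addIr (- m))). Qed.

Lemma sumr_reflect (F : G -> R) k : \sum_m F (k - m) = \sum_m F m.
Proof. by rewrite [RHS](reindex_inj (h := fun m => k - m)) // => a b /addrI/oppr_inj. Qed.

Lemma young_conv_l p q : (forall m, 0 <= q m) ->
  \sum_k (\sum_m q m * p (k - m)) ^+ 2 <= (\sum_m q m) ^+ 2 * \sum_m p m ^+ 2.
Proof.
move=> q_ge0.
apply: (@le_trans _ _ (\sum_k (\sum_m q m) * (\sum_m q m * p (k - m) ^+ 2))).
  by apply: ler_sum => k _; apply: cauchy_schwarz_weighted.
rewrite -mulr_sumr expr2 -mulrA ler_wpM2l ?sumr_ge0 //.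
rewrite exchange_big mulr_suml; apply: ler_sum => m _.
by rewrite -mulr_sumr (sumr_translate (fun x => p x ^+ 2)).
Qed.

Lemma young_conv_r p q : (forall m, 0 <= q m) ->
  \sum_k (\sum_m p m * q (k - m)) ^+ 2 <= (\sum_m q m) ^+ 2 * \sum_m p m ^+ 2.
Proof.
move=> q_ge0.
have swap k : \sum_m p m * q (k - m) = \sum_m q m * p (k - m).
  rewrite -(sumr_reflect (fun m => q m * p (k - m)) k).
  by apply: eq_bigr => m _; rewrite subKr mulrC.
under eq_bigr do rewrite swap.
exact: young_conv_l.
Qed.

End YoungConvolution.

Section DiscreteFourier.
Context {R : rcfType} {G : finZmodType}.
Variable e : G -> G -> R[i].
Hypothesis pairingDl : forall k m x, e (k + m) x = e k x * e m x.
Hypothesis pairingC : forall k x, e k x = e x k.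
Hypothesis pairing0l : forall x, e 0 x = 1.
Hypothesis sum_pairing : forall x, \sum_k e k x = #|G|%:R * (x == 0)%:R.
Hypothesis pairingJ : forall k x, conjc (e k x) = e (- k) x.

Local Notation normc := (@Normc.normc R).
Local Notation M := (#|G|%:R : R[i]).
Local Notation MR := (#|G|%:R : R).

Lemma pairingDr k x y : e k (x + y) = e k x * e k y.
Proof. by rewrite pairingC pairingDl -!(pairingC k). Qed.

Lemma pairingNl_mul k x : e (- k) x * e k x = 1.
Proof. by rewrite -pairingDl addNr pairing0l. Qed.

Lemma pairingNr k x : e k (- x) = e (- k) x.
Proof.
rewrite -[LHS]mulr1 -(pairingNl_mul k x) mulrCA -pairingDr addNr.
by rewrite (pairingC k 0) pairing0l mulr1.
Qed.

Lemma pairing_unit k x : e k x * conjc (e k x) = 1.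
Proof. by rewrite pairingJ mulrC pairingNl_mul. Qed.

Definition dft (phi : G -> R[i]) (k : G) : R[i] := \sum_x phi x * e (- k) x.

Lemma dft_inversion (phi : G -> R[i]) x : \sum_k dft phi k * e k x = M * phi x.
Proof.
under eq_bigr => k _ do rewrite mulr_suml.
rewrite exchange_big /=.
have inner y : \sum_k phi y * e (- k) y * e k x = phi y * (M * (- y + x == 0)%:R).
  by rewrite -sum_pairing mulr_sumr; apply: eq_bigr => k _; rewrite -mulrA -pairingNr -pairingDr.
under eq_bigr => y _ do rewrite inner.
rewrite (bigD1 x) //= big1 ?addr0 ?addNr ?eqxx ?mulr1 1?mulrC // => y /negbTE yx.
by rewrite addrC subr_eq0 eq_sym yx mulr0n !mulr0.
Qed.

Lemma dftJ (phi : G -> R[i]) k : conjc (dft phi k) = \sum_x conjc (phi x) * e k x.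
Proof. by rewrite rmorph_sum; apply: eq_bigr => x _; rewrite rmorphM /= pairingJ opprK. Qed.

Lemma parseval (phi : G -> R[i]) :
  \sum_k dft phi k * conjc (dft phi k) = M * \sum_x phi x * conjc (phi x).
Proof.
under eq_bigr => k _ do rewrite dftJ mulr_sumr.
rewrite exchange_big /= mulr_sumr; apply: eq_bigr => x _.
under eq_bigr => k _ do rewrite mulrCA.
by rewrite -mulr_sumr dft_inversion; ring.
Qed.

Lemma dft_mul (phi psi : G -> R[i]) k :
  M * dft (fun x => phi x * psi x) k = \sum_m dft phi m * dft psi (k - m).
Proof.
rewrite /dft mulr_sumr.
transitivity (\sum_x \sum_m dft phi m * (psi x * e (- (k - m)) x)).
  apply: eq_bigr => x _; rewrite !mulrA -dft_inversion !mulr_suml.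
  by apply: eq_bigr => m _; rewrite opprB pairingDl; ring.
by rewrite exchange_big; apply: eq_bigr => m _; rewrite -/(dft phi m) mulr_sumr.
Qed.

Lemma dft_shift (phi : G -> R[i]) u k : dft (fun x => phi (x + u)) k = e k u * dft phi k.
Proof.
rewrite /dft (reindex_inj (addIr (- u))) /= mulr_sumr.
by apply: eq_bigr => y _; rewrite addrNK pairingDr pairingNr opprK; ring.
Qed.

Variables (s : R) (u1 u2 u3 : G).

Definition lap (phi : G -> R[i]) (x : G) : R[i] :=
  s%:C * (phi (x + u1) + phi (x - u1) + phi (x + u2) + phi (x - u2)
          + phi (x + u3) + phi (x - u3) - 6%:R * phi x).

Definition lap_symbol (k : G) : R :=
  s * (normc (1 - e k u1) ^+ 2 + normc (1 - e k u2) ^+ 2 + normc (1 - e k u3) ^+ 2).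

Lemma dft_lap (phi : G -> R[i]) k : dft (lap phi) k = - (lap_symbol k)%:C * dft phi k.
Proof.
have shifts u : dft (fun x => phi (x + u)) k + dft (fun x => phi (x - u)) k - 2%:R * dft phi k
    = - (normc (1 - e k u) ^+ 2)%:C * dft phi k.
  by rewrite !dft_shift sqr_normc_1B_unit ?pairing_unit // pairingJ -pairingNr; ring.
transitivity (s%:C * (
     (dft (fun x => phi (x + u1)) k + dft (fun x => phi (x - u1)) k - 2%:R * dft phi k)
   + (dft (fun x => phi (x + u2)) k + dft (fun x => phi (x - u2)) k - 2%:R * dft phi k)
   + (dft (fun x => phi (x + u3)) k + dft (fun x => phi (x - u3)) k - 2%:R * dft phi k))).
  rewrite /dft /lap mulr_sumr -!sumrN -!big_split mulr_sumr /=.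
  by apply: eq_bigr => x _; ring.
by rewrite !shifts /lap_symbol !rmorphM !rmorphD /=; ring.
Qed.

Hypothesis s_ge0 : 0 <= s.

Lemma lap_symbol_ge0 k : 0 <= lap_symbol k.
Proof. by rewrite mulr_ge0 // !addr_ge0 ?sqr_ge0. Qed.

Lemma sqr_normc_1B_pairing_le k m u :
  normc (1 - e k u) ^+ 2 <= 2 * normc (1 - e m u) ^+ 2 + 2 * normc (1 - e (k - m) u) ^+ 2.
Proof.
have tri : normc (1 - e k u) <= normc (1 - e m u) + normc (1 - e (k - m) u).
  rewrite -{1}(subrK m k) (pairingDl (k - m) m).
  have -> : 1 - e (k - m) u * e m u = (1 - e m u) + e m u * (1 - e (k - m) u) by ring.
  by apply: le_trans (le_normcD _ _) _; rewrite Normc.normcM (normc_unit _ (pairing_unit m u)) mul1r.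
set x := normc (1 - e k u) in tri *; set y := normc (1 - e m u) in tri *.
set z := normc (1 - e (k - m) u) in tri *.
apply: le_trans (_ : (y + z) ^+ 2 <= _).
  by rewrite !expr2 ler_pM ?normc_ge0.
by have := sqr_ge0 (y - z); rewrite sqrrB sqrrD; lra.
Qed.

Lemma lap_symbol_le k m : lap_symbol k <= 2 * lap_symbol m + 2 * lap_symbol (k - m).
Proof.
have := sqr_normc_1B_pairing_le k m u1; have := sqr_normc_1B_pairing_le k m u2.
have := sqr_normc_1B_pairing_le k m u3.
move=> /(ler_wpM2l s_ge0) h3 /(ler_wpM2l s_ge0) h2 /(ler_wpM2l s_ge0) h1.
rewrite /lap_symbol; lra.
Qed.

Definition l2norm (phi : G -> R[i]) : R := Num.sqrt (MR^-1 * \sum_x normc (phi x) ^+ 2).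

Lemma eq_l2norm (phi psi : G -> R[i]) : phi =1 psi -> l2norm phi = l2norm psi.
Proof. by move=> eq_phi; rewrite /l2norm; under eq_bigr do rewrite eq_phi. Qed.

Lemma cardR_gt0 : 0 < MR.
Proof. by rewrite ltr0n; apply/card_gt0P; exists 0. Qed.

Lemma parseval_normc (phi : G -> R[i]) :
  \sum_k normc (dft phi k) ^+ 2 = MR * \sum_x normc (phi x) ^+ 2.
Proof.
apply: complexI; rewrite rmorphM !rmorph_sum /=.
under eq_bigr do rewrite sqr_normc.
under [in RHS]eq_bigr do rewrite sqr_normc.
by rewrite parseval rmorph_nat.
Qed.

Lemma sum_sqr_normc_dft (phi : G -> R[i]) :
  \sum_k normc (dft phi k) ^+ 2 = MR ^+ 2 * l2norm phi ^+ 2.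
Proof.
rewrite /l2norm sqr_sqrtr; last by rewrite mulr_ge0 ?invr_ge0 ?sumr_ge0 // => x _; rewrite sqr_ge0.
by rewrite parseval_normc; field; rewrite gt_eqF ?cardR_gt0.
Qed.

Lemma normc_dft_lap (phi : G -> R[i]) k : normc (dft (lap phi) k) = lap_symbol k * normc (dft phi k).
Proof. by rewrite dft_lap Normc.normcM -rmorphN normc_real normrN ger0_norm ?lap_symbol_ge0. Qed.

Lemma sum_sqr_lap_symbol_dft (phi : G -> R[i]) :
  \sum_k (lap_symbol k * normc (dft phi k)) ^+ 2 = MR ^+ 2 * l2norm (lap phi) ^+ 2.
Proof. by rewrite -sum_sqr_normc_dft; under [RHS]eq_bigr do rewrite normc_dft_lap. Qed.

Lemma l2norm_ge0 (phi : G -> R[i]) : 0 <= l2norm phi.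
Proof. exact: sqrtr_ge0. Qed.

Variable K0 : R.
Hypothesis sum_inv_sqr_lap_symbol_le : \sum_k (1 + lap_symbol k)^-2 <= K0.

Lemma sqr_sum_normc_dft_le (phi : G -> R[i]) :
  (\sum_k normc (dft phi k)) ^+ 2 <= 2 * K0 * MR ^+ 2 * (l2norm phi + l2norm (lap phi)) ^+ 2.
Proof.
pose w k := 1 + lap_symbol k.
have w_gt0 k : 0 < w k by rewrite ltr_pwDl ?lap_symbol_ge0.
have weighted : \sum_k (w k * normc (dft phi k)) ^+ 2
    <= 2 * MR ^+ 2 * (l2norm phi + l2norm (lap phi)) ^+ 2.
  apply: le_trans (_ : \sum_k (2 * normc (dft phi k) ^+ 2
      + 2 * (lap_symbol k * normc (dft phi k)) ^+ 2) <= _).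
    apply: ler_sum => k _; rewrite /w.
    by have := sqr_ge0 (normc (dft phi k) - lap_symbol k * normc (dft phi k)); lra.
  rewrite big_split -!mulr_sumr /= sum_sqr_normc_dft sum_sqr_lap_symbol_dft.
  have := mulr_ge0 (sqr_ge0 MR) (mulr_ge0 (l2norm_ge0 phi) (l2norm_ge0 (lap phi))).
  lra.
have -> : \sum_k normc (dft phi k) = \sum_k (w k * normc (dft phi k)) * (w k)^-1.
  by apply: eq_bigr => k _; rewrite mulrAC divff ?mul1r ?gt_eqF.
apply: le_trans (cauchy_schwarz (fun k => w k * normc (dft phi k)) (fun k => (w k)^-1)) _.
under [X in _ * X <= _]eq_bigr do rewrite exprVn.
have := ler_pM _ _ weighted sum_inv_sqr_lap_symbol_le.
rewrite sumr_ge0 => [|k _]; last by rewrite sqr_ge0.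
rewrite sumr_ge0 => [|k _]; last by rewrite invr_ge0 exprn_ge0 // addr_ge0 ?lap_symbol_ge0.
by rewrite /w; lra.
Qed.

Lemma lap_symbol_dft_mul_le (phi psi : G -> R[i]) k :
  MR * (lap_symbol k * normc (dft (fun x => phi x * psi x) k)) <=
  2 * \sum_m (lap_symbol m * normc (dft phi m)) * normc (dft psi (k - m))
  + 2 * \sum_m normc (dft phi m) * (lap_symbol (k - m) * normc (dft psi (k - m))).
Proof.
rewrite mulrCA -[MR]ger0_norm ?ler0n // -normc_real -Normc.normcM rmorph_nat dft_mul.
apply: le_trans (_ : lap_symbol k * \sum_m normc (dft phi m) * normc (dft psi (k - m)) <= _).
  rewrite ler_wpM2l ?lap_symbol_ge0 //.
  by apply: le_trans (normc_sum _ _) _; apply: ler_sum => m _; rewrite Normc.normcM.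
rewrite mulr_sumr !mulr_sumr -big_split; apply: ler_sum => m _ /=.
have ab_ge0 := mulr_ge0 (normc_ge0 (dft phi m)) (normc_ge0 (dft psi (k - m))).
have := ler_wpM2r ab_ge0 (lap_symbol_le k m); lra.
Qed.

Lemma sqr_l2norm_lap_mul_le (phi psi : G -> R[i]) :
  MR ^+ 2 * l2norm (lap (fun x => phi x * psi x)) ^+ 2 <=
  8 * ((\sum_k normc (dft psi k)) ^+ 2 * l2norm (lap phi) ^+ 2
     + (\sum_k normc (dft phi k)) ^+ 2 * l2norm (lap psi) ^+ 2).
Proof.
set a := fun k => normc (dft phi k); set b := fun k => normc (dft psi k).
pose X k := \sum_m (lap_symbol m * a m) * b (k - m).
pose Y k := \sum_m a m * (lap_symbol (k - m) * b (k - m)).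
rewrite -(ler_pM2l (exprn_gt0 2 cardR_gt0)) -sum_sqr_lap_symbol_dft mulr_sumr.
apply: le_trans (_ : \sum_k (8 * X k ^+ 2 + 8 * Y k ^+ 2) <= _).
  apply: ler_sum => k _; rewrite -exprMn.
  apply: le_trans (_ : (2 * X k + 2 * Y k) ^+ 2 <= _).
    have lhs_ge0 := mulr_ge0 (ler0n R #|G|) (mulr_ge0 (lap_symbol_ge0 k) (normc_ge0
      (dft (fun x => phi x * psi x) k))).
    by have conv := lap_symbol_dft_mul_le phi psi k; rewrite !expr2 ler_pM.
  by have := sqr_ge0 (X k - Y k); lra.
have young_X : \sum_k X k ^+ 2 <= (\sum_k b k) ^+ 2 * \sum_k (lap_symbol k * a k) ^+ 2.
  by apply: young_conv_r => k; exact: normc_ge0.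
have young_Y : \sum_k Y k ^+ 2 <= (\sum_k a k) ^+ 2 * \sum_k (lap_symbol k * b k) ^+ 2.
  by apply: young_conv_l => k; exact: normc_ge0.
move: young_X young_Y; rewrite !sum_sqr_lap_symbol_dft big_split -!mulr_sumr /=.
lra.
Qed.

Lemma l2norm_lap_mul_le (phi psi : G -> R[i]) :
  l2norm (lap (fun x => phi x * psi x)) ^+ 2
  <= 32 * K0 * (l2norm phi + l2norm (lap phi)) ^+ 2 * (l2norm psi + l2norm (lap psi)) ^+ 2.
Proof.
rewrite -(ler_pM2l (exprn_gt0 2 cardR_gt0)); apply: le_trans (sqr_l2norm_lap_mul_le phi psi) _.
have sqr_le_sqrD (p q : R) : 0 <= p -> 0 <= q -> q ^+ 2 <= (p + q) ^+ 2.
  by move=> p_ge0 q_ge0; rewrite ler_pXn2r ?nnegrE ?addr_ge0 // lerDr.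
have lap_phi := sqr_le_sqrD _ _ (l2norm_ge0 phi) (l2norm_ge0 (lap phi)).
have lap_psi := sqr_le_sqrD _ _ (l2norm_ge0 psi) (l2norm_ge0 (lap psi)).
have := ler_pM (sqr_ge0 _) (sqr_ge0 _) (sqr_sum_normc_dft_le psi) lap_phi.
have := ler_pM (sqr_ge0 _) (sqr_ge0 _) (sqr_sum_normc_dft_le phi) lap_psi.
lra.
Qed.

End DiscreteFourier.

Lemma cos_le0_pihalf_pi (R : realType) (x : R) : pi / 2 <= x <= pi -> cos x <= 0.
Proof.
move=> /andP[x_ge x_le]; rewrite -(subrK pi x) cosDpi oppr_le0.
by have pi_gt0 := pi_gt0 R; apply: cos_ge0_pihalf; apply/andP; split; lra.
Qed.

Section RootOfUnity.
Variables (R : realType) (N : nat).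
Hypothesis N_gt0 : (0 < N)%N.
Local Notation normc := (@Normc.normc R).

Definition omega : R[i] := cos (pi *+ 2 / N%:R) +i* sin (pi *+ 2 / N%:R).

Lemma N_neq0 : N%:R != 0 :> R.
Proof. by rewrite pnatr_eq0 -lt0n. Qed.

Lemma omegaX m : omega ^+ m = cos (m%:R * (pi *+ 2 / N%:R)) +i* sin (m%:R * (pi *+ 2 / N%:R)).
Proof.
elim: m => [|m IH]; first by rewrite expr0 mul0r cos0 sin0.
rewrite exprSr IH /omega; set t := pi *+ 2 / N%:R.
rewrite -natr1 mulrDl mul1r cosD sinD.
by apply/eqP; rewrite eq_complex /=; apply/andP; split; apply/eqP; ring.
Qed.

Lemma omegaXN : omega ^+ N = 1.
Proof.
rewrite omegaX (_ : N%:R * _ = pi *+ 2) ?cos2pi ?sin2pi //.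
by field; exact: N_neq0.
Qed.

Lemma omegaX_eqmod a b : (a = b %[mod N])%N -> omega ^+ a = omega ^+ b.
Proof.
move=> ab; rewrite (divn_eq a N) (divn_eq b N) ab !exprD.
by rewrite !(mulnC _ N) !exprM omegaXN !expr1n.
Qed.

Lemma omegaX_unit m : omega ^+ m * conjc (omega ^+ m) = 1.
Proof.
rewrite rmorphXn -exprMn -sqr_normc sqr_normc_ReIm /= cos2Dsin2.
by rewrite expr1n.
Qed.

Lemma omegaXB m : (m <= N)%N -> omega ^+ (N - m) = conjc (omega ^+ m).
Proof.
move=> m_le; rewrite -[LHS]mulr1 -(omegaX_unit m) mulrA -exprD subnK //.
by rewrite omegaXN mul1r.
Qed.

Lemma normc_1B_omegaX_double m : normc (1 - omega ^+ (m * 2)) <= 2 * normc (1 - omega ^+ m).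
Proof.
rewrite exprM (_ : 1 - _ = (1 - omega ^+ m) * (1 + omega ^+ m)); last by ring.
rewrite Normc.normcM mulrC ler_wpM2r ?normc_ge0 //.
apply: le_trans (le_normcD _ _) _.
by rewrite Normc.normc1 (normc_unit _ (omegaX_unit m)).
Qed.

(* For N/4 <= m <= N/2 the angle of omega^m lies in [pi/2, pi]. *)
Lemma sqr_normc_1B_omegaX_ge_large m : (N <= 4 * m)%N -> (2 * m <= N)%N ->
  8 * m%:R ^+ 2 <= N%:R ^+ 2 * normc (1 - omega ^+ m) ^+ 2 :> R.
Proof.
rewrite -(ler_nat R) -(ler_nat R) !natrM => large small.
have N_gt0' : 0 < N%:R :> R by rewrite ltr0n.
have pi_gt0 := pi_gt0 R.
pose t : R := m%:R * (pi *+ 2 / N%:R).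
have cos_le0 : cos t <= 0.
  apply: cos_le0_pihalf_pi; apply/andP; split.
  - rewrite -subr_ge0 (_ : t - pi / 2 = pi * (4 * m%:R - N%:R) / (2 * N%:R)).
      by rewrite divr_ge0 ?mulr_ge0; lra.
    by rewrite /t; field; exact: N_neq0.
  - rewrite -subr_ge0 (_ : pi - t = pi * (N%:R - 2 * m%:R) / N%:R).
      by rewrite divr_ge0 ?mulr_ge0; lra.
    by rewrite /t; field; exact: N_neq0.
rewrite omegaX -/t sqr_normc_ReIm /=.
have -> : (1 - cos t) ^+ 2 + (0 - sin t) ^+ 2 = 2 - 2 * cos t.
  by have := cos2Dsin2 t; rewrite !expr2; lra.
have ncos_ge0 : 0 <= - cos t by rewrite oppr_ge0.
have := mulr_ge0 (sqr_ge0 (N%:R : R)) ncos_ge0; nra.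
Qed.

Lemma sqr_normc_1B_omegaX_ge m : (0 < m)%N -> (2 * m <= N)%N ->
  8 * m%:R ^+ 2 <= N%:R ^+ 2 * normc (1 - omega ^+ m) ^+ 2 :> R.
Proof.
have [d] := ubnP (N - m); elim: d m => // d IHd m N_m_lt m_gt0 m_le.
have [large|small] := leqP N (4 * m); first exact: sqr_normc_1B_omegaX_ge_large.
(* otherwise double m and use |1 - w^(2m)| <= 2 |1 - w^m| *)
have := IHd (m * 2)%N ltac:(lia) ltac:(lia) ltac:(lia).
have := normc_1B_omegaX_double m; have := normc_ge0 (1 - omega ^+ (m * 2)).
rewrite natrM; set x := normc (1 - omega ^+ (m * 2)); set y := normc (1 - omega ^+ m).
move=> x_ge0 x_le; have x2_le : x ^+ 2 <= (2 * y) ^+ 2 by rewrite !expr2 ler_pM.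
clearbody x y; have := ler_wpM2l (sqr_ge0 (N%:R : R)) x2_le; lra.
Qed.

Lemma sqr_normc_1B_omegaX_zpnorm j : (j < N)%N ->
  8 * (zpnorm N j)%:R ^+ 2 <= N%:R ^+ 2 * normc (1 - omega ^+ j) ^+ 2 :> R.
Proof.
move=> j_lt; have [->|j_gt0] := posnP j.
  by rewrite /zpnorm min0n expr0n /= mulr0 mulr_ge0 ?sqr_ge0.
have -> : normc (1 - omega ^+ j) = normc (1 - omega ^+ zpnorm N j).
  rewrite /zpnorm; case: leqP => [_ //|_].
  by rewrite (omegaXB _ (ltnW j_lt)) -normcJ rmorphB rmorph1.
by apply: sqr_normc_1B_omegaX_ge; rewrite /zpnorm; lia.
Qed.

End RootOfUnity.

Definition torus3 (n : nat) := ('I_n.+1 * 'I_n.+1 * 'I_n.+1)%type.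
HB.instance Definition _ n := GRing.Zmodule.on (torus3 n).
HB.instance Definition _ n := Finite.on (torus3 n).

Lemma val_ordD n (k m : 'I_n.+1) : nat_of_ord (k + m) = ((k + m) %% n.+1)%N.
Proof. by []. Qed.

Section Torus.
Variables (R : realType) (n : nat).
Local Notation N := n.+1.
Local Notation G := (torus3 n).
Local Notation omega := (omega R N).

Definition zp_pairing (k x : 'I_N) : R[i] := omega ^+ (k * x).

Lemma zp_pairingDl k m x : zp_pairing (k + m) x = zp_pairing k x * zp_pairing m x.
Proof. by rewrite /zp_pairing -exprD -mulnDl; apply: omegaX_eqmod; rewrite // val_ordD modnMml. Qed.

Lemma zp_pairingJ k x : conjc (zp_pairing k x) = zp_pairing (- k) x.
Proof.
have inv : zp_pairing (- k) x * zp_pairing k x = 1.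
  by rewrite -zp_pairingDl addNr /zp_pairing mul0n expr0.
by rewrite -[LHS]mulr1 -inv mulrCA (mulrC (conjc _)) omegaX_unit mulr1.
Qed.

Lemma sum_zp_pairing x : \sum_k zp_pairing k x = N%:R * (x == 0)%:R.
Proof.
have [->|x_neq0] := eqVneq x 0.
  by under eq_bigr do rewrite /zp_pairing muln0 expr0; rewrite sumr_const card_ord mulr1.
(* a geometric sum of ratio omega^x, which is a root of unity other than 1 *)
rewrite mulr0; pose v := omega ^+ x.
have x_gt0 : (0 < x)%N by move: x_neq0; rewrite lt0n; apply: contra => /eqP x0; apply/eqP/val_inj.
have v_neq1 : v - 1 != 0.
  rewrite subr_eq0; apply/negP => /eqP v1.
  have := sqr_normc_1B_omegaX_zpnorm R N (ltn0Sn n) _ (ltn_ord x).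
  rewrite -/v v1 subrr Normc.normc0 expr0n mulr0.
  have : (0 < zpnorm N x)%N by rewrite /zpnorm; have := ltn_ord x; lia.
  by rewrite -(ltr_nat R) => /(exprn_gt0 2); lra.
under eq_bigr => k _ do rewrite /zp_pairing mulnC exprM -/v.
have : (v - 1) * \sum_(k < N) v ^+ k = 0.
  by rewrite -subrX1 -exprM mulnC exprM omegaXN // expr1n subrr.
by move/eqP; rewrite mulf_eq0 (negbTE v_neq1) => /eqP.
Qed.

Definition pairing3 (k x : G) : R[i] :=
  zp_pairing k.1.1 x.1.1 * zp_pairing k.1.2 x.1.2 * zp_pairing k.2 x.2.

Lemma pairing3Dl k m x : pairing3 (k + m) x = pairing3 k x * pairing3 m x.
Proof. by rewrite /pairing3 !zp_pairingDl; ring. Qed.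

Lemma pairing3C k x : pairing3 k x = pairing3 x k.
Proof. by rewrite /pairing3 /zp_pairing (mulnC k.1.1) (mulnC k.1.2) (mulnC k.2). Qed.

Lemma pairing30l x : pairing3 0 x = 1.
Proof. by rewrite /pairing3 /zp_pairing !mul0n !expr0 !mulr1. Qed.

Lemma pairing3J k x : conjc (pairing3 k x) = pairing3 (- k) x.
Proof. by rewrite /pairing3 !rmorphM /= !zp_pairingJ. Qed.

Lemma sum_torus3 (V : nmodType) (F : G -> V) :
  \sum_k F k = \sum_(a < N) \sum_(b < N) \sum_(c < N) F ((a, b), c).
Proof. by rewrite [RHS]pair_big [RHS]pair_big; apply: eq_bigr => [[[a b] c]]. Qed.

Lemma card_torus3 : #|(G : finType)| = (N * N * N)%N.
Proof. by rewrite !card_prod !card_ord. Qed.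

Lemma sum_pairing3 x : \sum_k pairing3 k x = #|(G : finType)|%:R * (x == 0)%:R.
Proof.
transitivity ((\sum_(a < N) zp_pairing a x.1.1) * (\sum_(b < N) zp_pairing b x.1.2)
              * (\sum_(c < N) zp_pairing c x.2)).
  rewrite sum_torus3 big_distrlr big_distrl; apply: eq_bigr => a _.
  by rewrite big_distrl; apply: eq_bigr => b _; rewrite big_distrr.
rewrite !sum_zp_pairing card_torus3 !natrM.
case: x => [[a b] c]; rewrite !xpair_eqE.
by case: (a == 0); case: (b == 0); case: (c == 0); rewrite /= ?mulr0 ?mul0r ?mulr1.
Qed.

Definition e1 : G := ((inZp 1, 0), 0).
Definition e2 : G := ((0, inZp 1), 0).
Definition e3 : G := ((0, 0), inZp 1).

Lemma omegaX_mod1 (a : nat) : omega ^+ (a * (1 %% N)) = omega ^+ a.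
Proof. by rewrite -[in RHS](muln1 a); apply: omegaX_eqmod; rewrite // modnMmr. Qed.

Lemma zpnorm_sqr_le_lap_symbol (k : G) :
  (zpnorm N k.1.1)%:R ^+ 2 + (zpnorm N k.1.2)%:R ^+ 2 + (zpnorm N k.2)%:R ^+ 2
  <= lap_symbol pairing3 (N%:R ^+ 2) e1 e2 e3 k.
Proof.
rewrite /lap_symbol /pairing3 /zp_pairing /= !muln0 !expr0 !mulr1 !mul1r !omegaX_mod1.
have b1 := sqr_normc_1B_omegaX_zpnorm R N (ltn0Sn n) _ (ltn_ord k.1.1).
have b2 := sqr_normc_1B_omegaX_zpnorm R N (ltn0Sn n) _ (ltn_ord k.1.2).
have b3 := sqr_normc_1B_omegaX_zpnorm R N (ltn0Sn n) _ (ltn_ord k.2).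
have := sqr_ge0 ((zpnorm N k.1.1)%:R : R); have := sqr_ge0 ((zpnorm N k.1.2)%:R : R).
have := sqr_ge0 ((zpnorm N k.2)%:R : R); lra.
Qed.

Lemma sum_inv_sqr_lap_symbol_le :
  \sum_k (1 + lap_symbol pairing3 (N%:R ^+ 2) e1 e2 e3 k)^-2 <= 120.
Proof.
apply: le_trans (sum_inv_sqr1D3_zpnorm_le R N); rewrite sum_torus3.
apply: ler_sum => a _; apply: ler_sum => b _; apply: ler_sum => c _.
rewrite -!addrA inv_sqr1D_le ?addr_ge0 ?sqr_ge0 // !addrA.
exact: (zpnorm_sqr_le_lap_symbol ((a, b), c)).
Qed.

End Torus.

Lemma eqmod_periodic (T : Type) (N : nat) (g : int -> T) :
  (forall z, g (z + N%:Z) = g z) -> forall z z', (z = z' %[mod N])%Z -> g z = g z'.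
Proof.
move=> gN z z' /eqP; rewrite eqz_mod_dvd => /dvdzP[q /eqP]; rewrite subr_eq => /eqP ->.
elim/int_rec: q => [|q IH|q IH]; first by rewrite mul0r add0r.
  by rewrite (_ : _ + z' = q%:Z * N%:Z + z' + N%:Z) ?gN // intS; ring.
by rewrite -gN (_ : _ + z' + _ = - q%:Z * N%:Z + z') // intS; ring.
Qed.

Lemma periodic_eqmod (R : realType) (N : nat) (f : gridfun R) i j k i' j' k' :
  periodic N f -> (i = i' %[mod N])%Z -> (j = j' %[mod N])%Z -> (k = k' %[mod N])%Z ->
  f i j k = f i' j' k'.
Proof.
move=> fN ii' jj' kk'.
rewrite (@eqmod_periodic _ N (fun z => f z j k) _ _ _ ii'); last by move=> z; case: (fN z j k).
rewrite (@eqmod_periodic _ N (fun z => f i' z k) _ _ _ jj'); last by move=> z; case: (fN i' z k).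
by rewrite (@eqmod_periodic _ N (fun z => f i' j' z) _ _ _ kk') // => z; case: (fN i' j' z).
Qed.

Section ZpCongruences.
Context {n : nat}.
Local Notation N := n.+1.
Implicit Types a b : 'I_N.

Lemma ordD_eqmod a b : (nat_of_ord (a + b) = a%:Z + b%:Z %[mod N])%Z.
Proof. by rewrite val_ordD -modz_nat modz_mod. Qed.

Lemma ordN_eqmod a : (nat_of_ord (- a) = - a%:Z %[mod N])%Z.
Proof.
rewrite (_ : nat_of_ord (- a) = ((N - a) %% N)%N) // -modz_nat modz_mod.
by rewrite -subzn ?(ltnW (ltn_ord a)) // modzDl.
Qed.

Lemma ordS_add_eqmod a b (d : int) : (b%:Z = d %[mod N])%Z ->
  ((nat_of_ord (a + b)).+1%:Z = a.+1%:Z + d %[mod N])%Z.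
Proof.
move=> bd; rewrite [in LHS]intS [in RHS]intS -[LHS]modzDmr ordD_eqmod modzDmr addrA.
by rewrite -[LHS]modzDmr bd modzDmr.
Qed.

Lemma ord0_eqmod : (nat_of_ord (0%R : 'I_N) = 0 %[mod N])%Z.
Proof. by []. Qed.

Lemma ordN0_eqmod : (nat_of_ord (- 0%R : 'I_N) = 0 %[mod N])%Z.
Proof. by rewrite oppr0. Qed.

Lemma inZp1_eqmod : (nat_of_ord (inZp 1 : 'I_N) = 1 %[mod N])%Z.
Proof. by rewrite (_ : nat_of_ord _ = (1 %% N)%N) // -modz_nat modz_mod. Qed.

Lemma opp_inZp1_eqmod : (nat_of_ord (- inZp 1 : 'I_N) = - 1 %[mod N])%Z.
Proof. by rewrite ordN_eqmod -modzNm inZp1_eqmod modzNm. Qed.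

End ZpCongruences.

Section GridRestriction.
Variables (R : realType) (n : nat).
Local Notation N := n.+1.
Local Notation G := (torus3 n).

(* The shift by one matches the summation range 1..N in [norm2]. *)
Definition grid_restrict (f : gridfun R) (x : G) : R[i] :=
  f (x.1.1.+1)%:Z (x.1.2.+1)%:Z (x.2.+1)%:Z.

Lemma grid_restrict_add_eqmod (f : gridfun R) (x y : G) (d1 d2 d3 : int) : periodic N f ->
  (y.1.1%:Z = d1 %[mod N])%Z -> (y.1.2%:Z = d2 %[mod N])%Z -> (y.2%:Z = d3 %[mod N])%Z ->
  grid_restrict f (x + y) = f ((x.1.1.+1)%:Z + d1) ((x.1.2.+1)%:Z + d2) ((x.2.+1)%:Z + d3).
Proof.
by move=> fN h1 h2 h3; apply: periodic_eqmod fN _ _ _; apply: ordS_add_eqmod.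
Qed.

Lemma grid_restrict_lap (f : gridfun R) x : periodic N f ->
  grid_restrict (lap_h N f) x = lap (N%:R ^+ 2) (e1 n) (e2 n) (e3 n) (grid_restrict f) x.
Proof.
move=> fN; have scale : ((hN R N)%:C)^-2 = (N%:R ^+ 2 : R)%:C.
  by rewrite /hN -rmorphXn -fmorphV div1r exprVn invrK.
rewrite /lap {1}/grid_restrict /lap_h scale.
rewrite (grid_restrict_add_eqmod _ _ (e1 n) 1 0 0 fN inZp1_eqmod ord0_eqmod ord0_eqmod).
rewrite (grid_restrict_add_eqmod _ _ (- e1 n) (- 1) 0 0 fN opp_inZp1_eqmod ordN0_eqmod ordN0_eqmod).
rewrite (grid_restrict_add_eqmod _ _ (e2 n) 0 1 0 fN ord0_eqmod inZp1_eqmod ord0_eqmod).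
rewrite (grid_restrict_add_eqmod _ _ (- e2 n) 0 (- 1) 0 fN ordN0_eqmod opp_inZp1_eqmod ordN0_eqmod).
rewrite (grid_restrict_add_eqmod _ _ (e3 n) 0 0 1 fN ord0_eqmod ord0_eqmod inZp1_eqmod).
rewrite (grid_restrict_add_eqmod _ _ (- e3 n) 0 0 (- 1) fN ordN0_eqmod ordN0_eqmod opp_inZp1_eqmod).
by rewrite /grid_restrict !addr0.
Qed.

Lemma norm2_grid_restrict (f : gridfun R) : norm2 N f = l2norm (grid_restrict f).
Proof.
rewrite /norm2 /l2norm sum_torus3 card_torus3 /hN; congr (Num.sqrt (_ * _)).
by rewrite !natrM div1r exprVn !exprS expr0 mulr1 mulrA.
Qed.

End GridRestriction.

Local Close Scope complex_scope.

Lemma periodic_gmul (R : realType) (N : nat) (f g : gridfun R) :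
  periodic N f -> periodic N g -> periodic N (gmul f g).
Proof.
move=> fN gN i j k; case: (fN i j k) => f1 f2 f3; case: (gN i j k) => g1 g2 g3.
by split; rewrite /gmul ?f1 ?g1 ?f2 ?g2 ?f3 ?g3.
Qed.

Theorem proposition4p2 (R : realType) :
  exists C1 : R, 0 < C1 /\
    forall (N : nat) (f g : gridfun R), (0 < N)%N ->
      periodic N f -> periodic N g ->
      norm2 N (lap_h N (gmul f g))
        <= C1 * (norm2 N f + norm2 N (lap_h N f))
              * (norm2 N g + norm2 N (lap_h N g)).
Proof.
exists 62; split => [|[//|n] f g _ fN gN]; first by rewrite ltr0n.
have norm2_lapE h : periodic n.+1 h -> norm2 n.+1 (lap_h n.+1 h)
    = l2norm (lap (n.+1%:R ^+ 2) (e1 n) (e2 n) (e3 n) (grid_restrict R n h)).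
  by move=> hN; rewrite norm2_grid_restrict; apply: eq_l2norm => x; exact: grid_restrict_lap.
have fgN := periodic_gmul _ _ _ _ fN gN.
rewrite !norm2_lapE // !norm2_grid_restrict.
have := l2norm_lap_mul_le _ (pairing3Dl R n) (pairing3C R n) (pairing30l R n)
  (sum_pairing3 R n) (pairing3J R n) _ _ _ _ (sqr_ge0 _) _ (sum_inv_sqr_lap_symbol_le R n)
  (grid_restrict R n f) (grid_restrict R n g).
set P := _ + _; set Q := _ + _; set X := l2norm _ => sqrX_le.
have [P_ge0 Q_ge0] : 0 <= P /\ 0 <= Q by split; rewrite addr_ge0 ?l2norm_ge0.
rewrite -(ler_pXn2r (_ : (0 < 2)%N)) ?nnegrE ?l2norm_ge0 ?mulr_ge0 //.
(* 62^2 >= 32 * 120 *)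
apply: le_trans sqrX_le _; rewrite !exprMn.
have := mulr_ge0 (sqr_ge0 P) (sqr_ge0 Q); nra.
Qed.
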